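(* Let $(\mathcal{S},\mathcal{A},P,R)$ be a finite Markov decision process with state space $\mathcal{S}=\{1,\dots,n\}$, finite action space $\mathcal{A}$, transition probabilities $P(s'\mid s,a)$ and reward $R(s,a,s')$, and let $\gamma\in[0,1)$. Define the Bellman operator $T:\mathbb{R}^n\to\mathbb{R}^n$ by $$(TV)(s)=\max_{a\in\mathcal{A}}\sum_{s'\in\mathcal{S}}P(s'\mid s,a)\big[R(s,a,s')+\gamma V(s')\big],$$ and let $V^*$ be the optimal value vector, i.e. the unique solution of $V^*=TV^*$. Fix $\epsilon>0$. Let $(s_k)_{k\ge 0}$ be a sequence of states (the state updated at iteration $k$) and consider the asynchronous noisy value iteration: for an arbitrary initial vector $\tilde V_0\in\mathbb{R}^n$, $$\tilde V_{k+1}(s)=\begin{cases}(T\tilde V_k)(s_k)+\tilde w_k, & s=s_k,\\ \tilde V_k(s), & s\neq s_k,\end{cases}$$ where the noise terms $\tilde w_k\in\mathbb{R}$ satisfy $|\tilde w_k|\le\epsilon$ for all $k$. Assume (a) every state is updated infinitely often, i.e. each $s\in\mathcal{S}$ equals $s_k$ for infinitely many $k$; and (b) there is a finite constant $M$ such that, defining $k_0=0$ and $k_{n+1}$ as the smallest index greater than $k_n$ such that every state of $\mathcal{S}$ is updated at least once at the iterations strictly after $k_n$ and up to $k_{n+1}$, one has $k_{n+1}-k_n\le M$ for all $n$. Then $$\limsup_{n\to\infty}\|V^*-\tilde V_{k_n}\|_\infty\le\frac{M\epsilon}{1-\gamma}.$$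
   Context: $\|\cdot\|_\infty$ denotes the maximum norm on $\mathbb{R}^n$. The noise $\tilde w_k$ models error introduced by computing the Bellman update homomorphically under an encryption scheme; it is only assumed to be bounded in absolute value by $\epsilon$ (it need not vanish). The noise may equivalently be thought of as entering inside the maximum, i.e. $\tilde V_{k+1}(s_k)=\max_a\big(\sum_{s'}P(s'\mid s_k,a)[R(s_k,a,s')+\gamma\tilde V_k(s')]+w_k(s_k,a)\big)$ with $|w_k(s_k,a)|\le\epsilon$, which yields an update of the stated form. *)

From HB Require Import structures.
From mathcomp Require Import all_boot all_order all_algebra.
From mathcomp Require Import all_classical all_reals all_analysis.
Set Implicit Arguments. Unset Strict Implicit. Unset Printing Implicit Defensive.
Import Order.TTheory GRing.Theory Num.Theory.
Local Open Scope ring_scope.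

(* Finite MDP with states 'I_n and a nonempty finite action type A
   (a0 is a witness of nonemptiness, used only as the seed of the max). *)

Definition bellman (R : realType) (n : nat) (A : finType) (a0 : A)
  (P : 'I_n -> A -> 'I_n -> R) (Rw : 'I_n -> A -> 'I_n -> R) (gamma : R)
  (V : 'I_n -> R) (s : 'I_n) : R :=
  let Q := fun a : A => \sum_(s' < n) P s a s' * (Rw s a s' + gamma * V s') in
  \big[Num.max/Q a0]_(a : A) Q a.

Definition sup_norm (R : realType) (n : nat) (V : 'I_n -> R) : R :=
  \big[Num.max/0]_(i < n) `|V i|.

Definition all_updated (n : nat) (st : nat -> 'I_n) (lo hi : nat) : Prop :=
  forall s : 'I_n, exists k, (lo < k <= hi)%N /\ st k = s.

(** The error [e_k := V* - V~_k] is controlled coordinatewise.  Since [T] is a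
    [gamma]-contraction in the maximum norm and [V* = T V*], an update of state
    [s] yields [|e_(k+1)(s)| <= gamma ||e_k|| + eps], while the other coordinates
    are unchanged.  With [c := eps / (1 - gamma)], the fixed point of
    [x |-> gamma x + eps], a uniform bound [||e_k|| <= c + x] from some time on
    therefore improves to [||e_k|| <= c + gamma x] once every state has been
    updated again, which happens in finite time.  Iterating from [x = ||e_0||]
    gives [limsup ||e_k|| <= c], a fortiori along the [k_m]; and [c <= M c]
    because [M >= k_1 - k_0 >= 1]. *)
From HB Require Import structures.
From mathcomp Require Import all_boot all_order all_algebra.
From mathcomp Require Import all_classical all_reals all_analysis.
From mathcomp Require Import ring lra zify.
Import Order.TTheory GRing.Theory Num.Theory.
Local Open Scope ring_scope.
Local Open Scope classical_set_scope.

Section SupNorm.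
Context {R : realType} {n : nat}.
Implicit Type V : 'I_n -> R.

Lemma norm_le_sup_norm V i : `|V i| <= sup_norm V.
Proof. exact: (le_bigmax _ (fun i => `|V i|)). Qed.

Lemma sup_norm_ge0 V : 0 <= sup_norm V.
Proof. by rewrite /sup_norm; elim/big_ind: _ => // x y; rewrite le_max => ->. Qed.

Lemma sup_norm_le V b : 0 <= b -> (forall i, `|V i| <= b) -> sup_norm V <= b.
Proof. by move=> b0 Vb; apply: bigmax_le. Qed.

End SupNorm.

Lemma dist_max_le (R : realDomainType) (x1 y1 x2 y2 b : R) :
  `|x1 - x2| <= b -> `|y1 - y2| <= b -> `|Num.max x1 y1 - Num.max x2 y2| <= b.
Proof.
move=> /ler_normlP[? ?] /ler_normlP[? ?]; apply/ler_normlP.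
by case: (leP x1 y1) => ?; case: (leP x2 y2) => ?; split; lra.
Qed.

Lemma dist_bigmax_le (R : realDomainType) (I : finType) (i0 : I) (F G : I -> R) b :
  (forall i, `|F i - G i| <= b) ->
  `|\big[Num.max/F i0]_i F i - \big[Num.max/G i0]_i G i| <= b.
Proof.
move=> FG; apply: (big_ind2 (fun x y => `|x - y| <= b)) => // *.
exact: dist_max_le.
Qed.

Lemma dist_expectation_le (R : realDomainType) n (p x y : 'I_n -> R) b :
  (forall i, 0 <= p i) -> \sum_i p i = 1 -> (forall i, `|x i - y i| <= b) ->
  `|\sum_i p i * x i - \sum_i p i * y i| <= b.
Proof.
move=> p0 p1 xy; rewrite -sumrB; apply: le_trans (ler_norm_sum _ _ _) _.
rewrite -[leRHS]mul1r -p1 mulr_suml; apply: ler_sum => i _.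
by rewrite -mulrBr normrM ger0_norm // ler_wpM2l.
Qed.

Section Bellman.
Variables (R : realType) (n : nat) (A : finType) (a0 : A).
Variables (P Rw : 'I_n -> A -> 'I_n -> R) (gamma : R).
Hypothesis P_ge0 : forall s a s', 0 <= P s a s'.
Hypothesis P_sum1 : forall s a, \sum_(s' < n) P s a s' = 1.
Hypothesis gamma_ge0 : 0 <= gamma.

Lemma bellman_contraction (V W : 'I_n -> R) s :
  `|bellman a0 P Rw gamma V s - bellman a0 P Rw gamma W s|
    <= gamma * sup_norm (fun i => V i - W i).
Proof.
apply: dist_bigmax_le => a; apply: dist_expectation_le => // i.
rewrite (_ : _ - _ = gamma * (V i - W i)); last by ring.
by rewrite normrM ger0_norm // ler_wpM2l // (norm_le_sup_norm (fun j => V j - W j)).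
Qed.

Lemma bellman_noisy_dist_le (V W : 'I_n -> R) s w eps :
  `|w| <= eps ->
  `|bellman a0 P Rw gamma V s - (bellman a0 P Rw gamma W s + w)|
    <= gamma * sup_norm (fun i => V i - W i) + eps.
Proof.
move=> w_eps; rewrite opprD addrA; apply: le_trans (ler_normB _ _) _.
by apply: lerD => //; apply: bellman_contraction.
Qed.

End Bellman.

Section AsynchronousContraction.
Context {R : realType} {n : nat} {st : nat -> 'I_n} {e : nat -> 'I_n -> R}.
Context {gamma eps : R}.
Hypothesis gamma_ge0 : 0 <= gamma.
Hypothesis gamma_lt1 : gamma < 1.
Hypothesis eps_ge0 : 0 <= eps.
Hypothesis e_updated : forall k, `|e k.+1 (st k)| <= gamma * sup_norm (e k) + eps.
Hypothesis e_frozen : forall k s, s != st k -> e k.+1 s = e k s.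
Hypothesis st_infinitely_often : forall s N, exists k, (N <= k)%N /\ st k = s.

Let c := eps / (1 - gamma).
Local Notation D k := (sup_norm (e k)).

Let c_ge0 : 0 <= c.
Proof. by rewrite divr_ge0 // subr_ge0 ltW. Qed.

Let c_fixed : gamma * c + eps = c.
Proof. by rewrite /c; field; rewrite subr_eq0 eq_sym lt_eqF. Qed.

Lemma err_update_le k x : D k <= c + x -> `|e k.+1 (st k)| <= c + gamma * x.
Proof.
move=> Dk; apply: le_trans (e_updated k) _.
have := c_fixed; have := ler_wpM2l gamma_ge0 Dk; rewrite mulrDr; lra.
Qed.

Lemma err_uniform_bound k : D k <= c + D 0.
Proof.
have D0_ge0 := sup_norm_ge0 (e 0); have c0 := c_ge0.
elim: k => [|k IH]; first lra.
apply: sup_norm_le => [|s]; first lra.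
have [->|s_k] := eqVneq s (st k).
  by apply: le_trans (err_update_le _ _ IH) _; rewrite lerD2l ler_piMl // ltW.
by rewrite e_frozen //; apply: le_trans (norm_le_sup_norm _ _) IH.
Qed.

Lemma err_le_after_update N x :
  (forall k, (N <= k)%N -> D k <= c + x) ->
  forall k s, (exists j, (N <= j < k)%N /\ st j = s) -> `|e k s| <= c + gamma * x.
Proof.
move=> DN; elim=> [|k IH] s [j [jk st_j]]; first by move: jk; rewrite ltn0 andbF.
have [->|s_k] := eqVneq s (st k).
  by apply: err_update_le; apply: DN; lia.
rewrite e_frozen //; apply: IH; exists j; split => //.
have : j != k by apply: contra_neq s_k => <-.
lia.
Qed.

Lemma all_updated_eventually N :
  exists N', forall k, (N' <= k)%N -> forall s, exists j, (N <= j < k)%N /\ st j = s.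
Proof.
have upd s : exists j, (N <= j)%N && (st j == s).
  by have [j [Nj <-]] := st_infinitely_often s N; exists j; rewrite Nj eqxx.
pose last_upd s := xchoose (upd s).
exists (maxn N (\max_s last_upd s).+1) => k Nk s; exists (last_upd s).
have /andP[N_upd /eqP st_upd] := xchooseP (upd s); split => //.
rewrite N_upd /=; apply: leq_trans Nk.
by rewrite leq_max ltnS (leq_bigmax (F := last_upd)) orbT.
Qed.

Lemma err_contracts_eventually N x : 0 <= x ->
  (forall k, (N <= k)%N -> D k <= c + x) ->
  exists N', forall k, (N' <= k)%N -> D k <= c + gamma * x.
Proof.
move=> x_ge0 DN; have [N' N'_sweep] := all_updated_eventually N.
exists N' => k N'k; apply: sup_norm_le => [|s].
  by apply: addr_ge0 => //; apply: mulr_ge0.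
exact: err_le_after_update _ _ DN k s (N'_sweep k N'k s).
Qed.

Lemma err_le_geometric i :
  exists N, forall k, (N <= k)%N -> D k <= c + gamma ^+ i * D 0.
Proof.
elim: i => [|i [N DN]].
  by exists 0%N => k _; rewrite expr0 mul1r err_uniform_bound.
have x_ge0 : 0 <= gamma ^+ i * D 0 by rewrite mulr_ge0 ?exprn_ge0 ?sup_norm_ge0.
have [N' DN'] := err_contracts_eventually _ _ x_ge0 DN.
by exists N' => k N'k; rewrite exprS -mulrA DN'.
Qed.

Lemma err_eventually_le (d : R) :
  0 < d -> exists N, forall k, (N <= k)%N -> D k <= c + d.
Proof.
move=> d_gt0.
have geom_cvg0 : (fun i => gamma ^+ i * D 0) @ \oo --> 0.
  rewrite -(mul0r (D 0)); apply: cvgMr_tmp; apply: cvg_expr.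
  by rewrite ger0_norm.
have [i _ geom_small] := (cvgrPdist_lt _ _).1 geom_cvg0 d d_gt0.
have := geom_small i (leqnn i); rewrite /= sub0r normrN => /ltW geom_d.
have [N DN] := err_le_geometric i.
exists N => k Nk; apply: le_trans (DN k Nk) _.
by rewrite lerD2l (le_trans (ler_norm _)).
Qed.

End AsynchronousContraction.

Lemma limn_esup_le (R : realType) (u : nat -> R) (l : R) :
  (forall d : R, 0 < d -> exists N, forall m, (N <= m)%N -> u m <= l + d) ->
  (limn_esup (fun m => (u m)%:E) <= l%:E)%E.
Proof.
move=> u_le; apply/lee_addgt0Pr => d d_gt0.
have [N uN] := u_le d d_gt0.
apply: (@le_trans _ _ (ereal_sup ((fun m => (u m)%:E) @` [set m | (N <= m)%N]))).
  by apply: ereal_inf_lbound; exists [set m | (N <= m)%N] => //; exists N.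
by apply: ge_ereal_sup => _ [m Nm <-]; rewrite lee_fin uN.
Qed.

Theorem theorem2 (R : realType) (n : nat) (A : finType) (a0 : A)
  (P : 'I_n -> A -> 'I_n -> R) (Rw : 'I_n -> A -> 'I_n -> R) (gamma eps : R)
  (Vstar : 'I_n -> R) (st : nat -> 'I_n) (w : nat -> R)
  (Vt : nat -> 'I_n -> R) (kseq : nat -> nat) (M : R) :
  (forall s a s', 0 <= P s a s') ->
  (forall s a, \sum_(s' < n) P s a s' = 1) ->
  0 <= gamma -> gamma < 1 ->
  (forall s, Vstar s = bellman a0 P Rw gamma Vstar s) ->
  0 < eps ->
  (forall k, `|w k| <= eps) ->
  (forall k s, Vt k.+1 s =
     if s == st k then bellman a0 P Rw gamma (Vt k) (st k) + w k else Vt k s) ->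
  (* (a) every state is updated infinitely often *)
  (forall s N, exists k, (N <= k)%N /\ st k = s) ->
  (* (b) k_0 = 0 and k_{m+1} is the smallest index > k_m such that every state
     is updated in (k_m, k_{m+1}] *)
  kseq 0%N = 0%N ->
  (forall m, (kseq m < kseq m.+1)%N /\ all_updated st (kseq m) (kseq m.+1) /\
     forall j, (kseq m < j < kseq m.+1)%N -> ~ all_updated st (kseq m) j) ->
  (forall m, ((kseq m.+1 - kseq m)%N)%:R <= M) ->
  (limn_esup (fun m => (sup_norm (fun s => Vstar s - Vt (kseq m) s))%:E)
     <= (M * eps / (1 - gamma))%:E)%E.
Proof.
move=> P_ge0 P_sum1 g_ge0 g_lt1 Vstar_fixed eps_gt0 w_eps Vt_step st_inf _ kseq_sweep M_gap.
pose e k s := Vstar s - Vt k s.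
have e_updated k : `|e k.+1 (st k)| <= gamma * sup_norm (e k) + eps.
  by rewrite /e Vt_step eqxx {1}Vstar_fixed; apply: bellman_noisy_dist_le.
have e_frozen k s : s != st k -> e k.+1 s = e k s.
  by move=> s_k; rewrite /e Vt_step (negbTE s_k).
have kseq_ge m : (m <= kseq m)%N.
  by elim: m => // m IH; have [+ _] := kseq_sweep m; lia.
have M_ge1 : 1 <= M.
  by apply: le_trans (M_gap 0%N); rewrite ler1n subn_gt0; case: (kseq_sweep 0%N).
apply: (@le_trans _ _ (eps / (1 - gamma))%:E).
  apply: limn_esup_le => d d_gt0.
  have [N eN] := err_eventually_le g_ge0 g_lt1 (ltW eps_gt0) e_updated e_frozen st_inf d d_gt0.
  by exists N => m Nm; exact: eN (leq_trans Nm (kseq_ge m)).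
have c_ge0 : 0 <= eps / (1 - gamma) by rewrite divr_ge0 // ltW // subr_gt0.
by rewrite lee_fin -mulrA ler_peMl.
Qed.
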